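(* Let $(g,f)$ be a Riordan matrix with $f(t)=\sum_{j\ge1}f_jt^j$; set $f_0=f_{-1}=0$ and $\tilde f_j=f_{j-1}$ for $j\ge0$ (so $\tilde f_0=\tilde f_1=0$). For a sequence $(b_j)_{j\ge0}$ set $\tilde b_0=0$ and $\tilde b_j=b_{j-1}$ for $j\ge1$. Then $(b_j)_{j\ge0}$ is a type-I $B$-sequence of $(g,f)$ if and only if $f_1=1$, $f_3=f_2^2$, for every $\ell\ge1$ $$b_{\ell-1}=f_{2\ell}-\sum_{\mathbf i=(i_1,\dots,i_k)\in\mathcal D_{2\ell,\ell-1}}\tilde b_k\,\tilde f_{i_1}\tilde f_{i_2}\cdots\tilde f_{i_k},$$ and for every $\ell\ge2$ $$f_{2\ell+1}=\sum_{\mathbf i=(i_1,\dots,i_k)\in\mathcal D_{2\ell+1}}\tilde b_k\,\tilde f_{i_1}\cdots\tilde f_{i_k} = f_2f_{2\ell}+\sum_{\mathbf i=(i_1,\dots,i_k)\in\mathcal D'_{2\ell+1,\ell}}\tilde b_k\,\tilde f_{i_1}\cdots\tilde f_{i_k}.$$ (Thus $b_0=f_2$, $b_1=f_4-b_0^3$, $f_5=b_0^4+3b_0b_1$, $b_2=f_6-b_0^5-5b_0^2b_1$, etc., with $f_{2\ell}$ arbitrary.)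
   Context: Let $K$ be $\mathbb{R}$ or $\mathbb{C}$. A (proper) Riordan matrix is a pair $(g,f)$ of formal power series in $K[[t]]$ with $g(0)=1$, $f(0)=0$, $f'(0)\neq 0$, identified with the infinite lower triangular matrix $(d_{n,k})_{n,k\ge0}$, $d_{n,k}=[t^n]g(t)f(t)^k$; we set $d_{n,k}=0$ if $n<0$, $k<0$ or $k>n$. A type-I $B$-sequence of $(g,f)$ is a sequence $(b_j)_{j\ge0}$ such that $d_{n+1,k}=d_{n,k-1}+\sum_{j\ge0}b_j d_{n-j,k+j}$ for all $n\ge0$ and $k\ge1$. For positive integers $n,m,k$, $\mathcal D_{n,m,k}$ is the set of tuples $(i_1,\dots,i_k)$ of positive integers with $i_1+\cdots+i_k=n$ (here $k\le m$); $\mathcal D_{n,m}=\bigcup_{k=1}^m\mathcal D_{n,m,k}$ (compositions of $n$ into at most $m$ parts), $\mathcal D_n=\mathcal D_{n,n}$ (all compositions of $n$), and $\mathcal D'_{n,m}=\bigcup_{k=2}^m\mathcal D_{n,m,k}$. By convention $\mathcal D_{2,0}=\emptyset$ (empty sums are $0$). In each sum, $k$ is the length of the composition $\mathbf i$. *)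

(* Formal power series over K are represented by their
   coefficient sequences nat -> K. *)
From HB Require Import structures.
From mathcomp Require Import all_boot all_order all_algebra.
Set Implicit Arguments. Unset Strict Implicit. Unset Printing Implicit Defensive.
Import Order.TTheory GRing.Theory Num.Theory.
Local Open Scope ring_scope.

Section Riordan.
Variable K : numFieldType.

Fixpoint fps_pow (f : nat -> K) (k : nat) (n : nat) : K :=
  match k with
  | 0 => (n == 0%N)%:R
  | k'.+1 => \sum_(i < n.+1) f i * fps_pow f k' (n - i)
  end.

(* d_{n,k} = [t^n] g(t) f(t)^k  (automatically 0 when k > n since f 0 = 0) *)
Definition riordan_entry (g f : nat -> K) (n k : nat) : K :=
  \sum_(i < n.+1) g i * fps_pow f k (n - i).

Definition is_riordan (g f : nat -> K) : Prop :=
  g 0%N = 1 /\ f 0%N = 0 /\ f 1%N != 0.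

(* type-I B-sequence: d_{n+1,k} = d_{n,k-1} + sum_{j>=0} b_j d_{n-j,k+j},
   n >= 0, k >= 1; terms with j > n vanish since d_{n-j,.} = 0 for n-j < 0. *)
Definition is_typeI_Bseq (g f b : nat -> K) : Prop :=
  forall n k : nat, (1 <= k)%N ->
    riordan_entry g f n.+1 k =
    riordan_entry g f n k.-1 +
    \sum_(j < n.+1) b j * riordan_entry g f (n - j) (k + j).

Definition shift_seq (s : nat -> K) (j : nat) : K :=
  if j is j'.+1 then s j' else 0.

Definition comp_sum (bt ft : nat -> K) (n kmin kmax : nat) : K :=
  \sum_(kmin <= k < kmax.+1)
     \sum_(t : k.-tuple 'I_n.+1 |
            all (fun i : 'I_n.+1 => (0 < val i)%N) t &&
            (sumn (map val t) == n))
        bt k * \prod_(i <- t) ft (val i).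

End Riordan.

From HB Require Import structures.
From mathcomp Require Import all_boot all_order all_algebra.
From mathcomp Require Import zify.
Import Order.TTheory GRing.Theory Num.Theory.
Local Open Scope ring_scope.

(* Comparing coefficients, the B-sequence recurrence for column k+1 of (g, f)
   at row n+1 says that [t^(n+1)] g f^k (f - t - sum_j b_j (t f)^(j+1)) = 0.
   Since g(0) = 1, induction on n shows that this holds for all n, k exactly
   when f = t + sum_j b_j (t f)^(j+1).  The sum over compositions of n into
   k parts is [t^n] (t f)^k; as t f has order 2 it vanishes for n < 2k and
   equals f_1^k for n = 2k, so the even and odd coefficients of the
   fixed-point equation give the stated recursions. *)

Lemma nat_parity_ind (P : nat -> Prop) :
  P 0%N -> P 1%N ->
  (forall l, (0 < l)%N -> P (2 * l)%N) -> (forall l, (0 < l)%N -> P (2 * l).+1) ->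
  forall i, P i.
Proof.
move=> P0 P1 Peven Podd i; rewrite -(odd_double_half i) -mul2n.
case: (odd i); case: (posnP i./2) => [-> | l_gt0] //=; by [exact: Podd | exact: Peven].
Qed.

Section PowerCoefficients.
Variable K : numFieldType.
Implicit Types (a : nat -> K) (p : {poly K}).

Lemma fps_pow1 a n : fps_pow a 1 n = a n.
Proof.
rewrite /= big_ord_recr /= subnn mulr1 big1 ?add0r // => i _.
by rewrite subn_eq0 leqNgt ltn_ord mulr0.
Qed.

Lemma fps_pow_eq0 a d k n :
  (forall i, (i < d)%N -> a i = 0) -> (n < d * k)%N -> fps_pow a k n = 0.
Proof.
move=> a_lt_d; elim: k n => [|k IH] n; first by rewrite muln0.
rewrite mulnS => hn; rewrite /= big1 // => i _.
have [/a_lt_d -> | hi] := ltnP i d; first by rewrite mul0r.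
by rewrite IH ?mulr0 //; move: (ltn_ord i); lia.
Qed.

Lemma fps_pow_mul a d k :
  (forall i, (i < d)%N -> a i = 0) -> fps_pow a k (d * k) = a d ^+ k.
Proof.
move=> a_lt_d; elim: k => [|k IH]; first by rewrite muln0 expr0.
rewrite mulnS; have hd : (d < (d + d * k).+1)%N by rewrite ltnS leq_addr.
rewrite /= (bigD1 (Ordinal hd)) //= addKn IH -exprS big1 ?addr0 // => i /eqP i_neq_d.
have [/a_lt_d -> | le_di] := ltnP i d; first by rewrite mul0r.
have lt_di : (d < i)%N.
  by rewrite ltn_neqAle le_di andbT; apply/eqP => e; apply: i_neq_d; apply: val_inj.
by rewrite (@fps_pow_eq0 a d) ?mulr0 //; move: (ltn_ord i); lia.
Qed.

Lemma sum_tuple_fps_pow a N k m : (m <= N)%N ->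
  \sum_(t : k.-tuple 'I_N.+1 | sumn (map val t) == m) \prod_(i <- t) a i
  = fps_pow a k m.
Proof.
elim: k m => [|k IH] m hm.
  case: m hm => [|m] _ /=; last by rewrite big_pred0 // => t; rewrite tuple0.
  by rewrite (big_pred1 [tuple]) ?big_nil // => t; rewrite tuple0.
pose cons_t (p : 'I_N.+1 * k.-tuple 'I_N.+1) := cons_tuple p.1 p.2.
rewrite (reindex cons_t) /=; last first.
  exists (fun t : k.+1.-tuple 'I_N.+1 => (thead t, [tuple of behead t])).
    by move=> [x t] _ /=; congr pair; apply: val_inj.
  by move=> [[|x s] //= ?] _; apply: val_inj.
rewrite -(pair_big_dep xpredT (fun x t => sumn (map val (cons_t (x, t))) == m)
  (fun x t => \prod_(i <- cons_t (x, t)) a i)) /=.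
rewrite [RHS](big_ord_widen N.+1 (fun i => a i * fps_pow a k (m - i))) //.
rewrite [RHS]big_mkcond /=; apply: eq_bigr => i _; rewrite ltnS.
case: leqP => hi; last by rewrite big_pred0 // => t; apply/eqP; lia.
rewrite -IH ?mulr_sumr; last by lia.
apply: eq_big => [t|t _]; last by rewrite /= big_cons.
by rewrite -[RHS](eqn_add2l i) subnKC.
Qed.

Lemma comp_sum_fps_pow (bt : nat -> K) a n kmin kmax : a 0%N = 0 ->
  comp_sum bt a n kmin kmax = \sum_(kmin <= k < kmax.+1) bt k * fps_pow a k n.
Proof.
move=> a0; apply: eq_bigr => k _.
rewrite -(@sum_tuple_fps_pow a n k n (leqnn n)) mulr_sumr.
rewrite [RHS](bigID (fun t : k.-tuple 'I_n.+1 => all (fun i => 0 < val i)%N t)) /=.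
rewrite [X in _ = _ + X]big1 ?addr0 => [|t /andP[_ has0]].
  by apply: eq_bigl => t; rewrite andbC.
apply/eqP; rewrite mulf_eq0 prodf_seq_eq0; apply/orP; right.
move: has0; rewrite -has_predC; apply: sub_has => i /=.
by rewrite lt0n negbK => /eqP ->; rewrite a0.
Qed.

Lemma comp_sum_nil (bt a : nat -> K) n kmin kmax : (kmax < kmin)%N ->
  comp_sum bt a n kmin kmax = 0.
Proof. by move=> hk; rewrite /comp_sum big_geq. Qed.

Lemma coef_exp_trunc a p M k m :
  (forall i, (i < M)%N -> p`_i = a i) -> (m < M)%N ->
  (p ^+ k)`_m = fps_pow a k m.
Proof.
move=> pa; elim: k m => [|k IH] m hm; first by rewrite expr0 coef1.
rewrite exprS coefM; apply: eq_bigr => i _.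
by rewrite pa ?IH //; move: (ltn_ord i); lia.
Qed.

End PowerCoefficients.

(* [t^i] (t + sum_j b_j (t f(t))^(j+1)) *)
Definition Bseq_series {K : numFieldType} (f b : nat -> K) (i : nat) : K :=
  (i == 1%N)%:R + comp_sum (shift_seq b) (shift_seq f) i 1 i.

Section BSequence.
Variables (K : numFieldType) (g f b : nat -> K).
Hypothesis f0 : f 0%N = 0.

Local Notation bt := (shift_seq b).
Local Notation ft := (shift_seq f).

Lemma shift_seq_lt2 i : (i < 2)%N -> ft i = 0.
Proof. by case: i => [|[|]]. Qed.

Lemma sum_shift_fps_pow_high n m p : (n < 2 * m)%N ->
  \sum_(m <= k < p) bt k * fps_pow ft k n = 0.
Proof.
move=> hn; rewrite big_nat_cond big1 // => k /andP[/andP[hk _] _].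
by rewrite (@fps_pow_eq0 _ _ 2) ?mulr0 //; [exact: shift_seq_lt2 | lia].
Qed.

Lemma Bseq_series0 : Bseq_series f b 0 = 0.
Proof. by rewrite /Bseq_series comp_sum_nil ?addr0. Qed.

Lemma Bseq_series1 : Bseq_series f b 1 = 1.
Proof.
by rewrite /Bseq_series comp_sum_fps_pow // big_nat1 fps_pow1 /= f0 mulr0 addr0.
Qed.

Lemma Bseq_series_even l : (0 < l)%N ->
  Bseq_series f b (2 * l) = comp_sum bt ft (2 * l) 1 l.-1 + b l.-1 * f 1%N ^+ l.
Proof.
case: l => // l _; rewrite /Bseq_series /=.
have -> : (2 * l.+1 == 1)%N = false by apply/eqP; lia.
rewrite add0r !comp_sum_fps_pow // (@big_cat_nat _ _ _ l.+1) //=; last by lia.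
congr (_ + _); rewrite big_ltn; last by lia.
rewrite sum_shift_fps_pow_high ?addr0; last by lia.
by rewrite (@fps_pow_mul _ _ 2) //; exact: shift_seq_lt2.
Qed.

Lemma Bseq_series_odd l : (0 < l)%N ->
  Bseq_series f b (2 * l).+1 = comp_sum bt ft (2 * l).+1 1 (2 * l).+1.
Proof.
move=> l_gt0; rewrite /Bseq_series.
have -> : ((2 * l).+1 == 1)%N = false by apply/eqP; lia.
by rewrite add0r.
Qed.

Lemma comp_sum_odd_split l : (0 < l)%N ->
  comp_sum bt ft (2 * l).+1 1 (2 * l).+1
  = b 0%N * f (2 * l) + comp_sum bt ft (2 * l).+1 2 l.
Proof.
move=> l_gt0; rewrite !comp_sum_fps_pow // big_ltn // fps_pow1; congr (_ + _).
rewrite (@big_cat_nat _ _ _ l.+1) //=; [|lia].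
by rewrite [X in _ + X]sum_shift_fps_pow_high ?addr0 //; lia.
Qed.

Lemma riordan_entry_coef M n k : (n < M)%N ->
  riordan_entry g f n k = (\poly_(i < M) g i * (\poly_(i < M) f i) ^+ k)`_n.
Proof.
move=> hn; rewrite coefM; apply: eq_bigr => i _.
have lt_iM : (i < M)%N by rewrite (leq_ltn_trans (leq_ord i)).
rewrite coef_poly lt_iM (@coef_exp_trunc _ f _ M) //; last by lia.
by move=> j hj; rewrite coef_poly hj.
Qed.

Lemma coef_Bseq_poly n i : (i < n.+2)%N ->
  ('X + \sum_(j < n.+1) b j *: (\poly_(m < n.+2) f m * 'X) ^+ j.+1)`_i
  = Bseq_series f b i.
Proof.
move=> hi; rewrite coefD coefX coef_sum /Bseq_series comp_sum_fps_pow //; congr (_ + _).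
have trunc_ft m : (m < n.+2)%N -> (\poly_(m < n.+2) f m * 'X)`_m = ft m.
  by case: m => [|m] hm; rewrite coefMX // coef_poly ltnW.
transitivity (\sum_(1 <= k < n.+2) bt k * fps_pow ft k i).
  rewrite big_add1 /= big_mkord; apply: eq_bigr => j _.
  by rewrite coefZ (@coef_exp_trunc _ ft _ n.+2).
rewrite (@big_cat_nat _ _ _ i.+1) //=.
by rewrite [X in _ + X]sum_shift_fps_pow_high ?addr0 //; lia.
Qed.

Lemma riordan_Bseq_defect n k :
  riordan_entry g f n.+1 k.+1
    - (riordan_entry g f n k
       + \sum_(j < n.+1) b j * riordan_entry g f (n - j) (k.+1 + j))
  = \sum_(i < n.+2) riordan_entry g f (n.+1 - i) k * (f i - Bseq_series f b i).
Proof.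
(* Only coefficients up to t^(n+1) are read, so g and f may be truncated. *)
set F := \poly_(i < n.+2) f i; set P := \poly_(i < n.+2) g i * F ^+ k.
set Q := 'X + \sum_(j < n.+1) b j *: (F * 'X) ^+ j.+1.
have entryP m : (m < n.+2)%N -> riordan_entry g f m k = P`_m.
  exact: riordan_entry_coef.
transitivity (P * (F - Q))`_n.+1.
  rewrite mulrBr coefB mulrDr coefD mulr_sumr coef_sum coefMX entryP //.
  rewrite (@riordan_entry_coef n.+2) // exprSr mulrA; congr (_ - (_ + _)).
  apply: eq_bigr => j _; rewrite -scalerAr coefZ exprMn mulrA coefMXn.
  rewrite ltnNge ltn_ord /= subSS (@riordan_entry_coef n.+2); last by lia.
  by rewrite -mulrA -exprD addnS.
rewrite mulrC coefM; apply: eq_bigr => i _.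
by rewrite mulrC coefB coef_poly ltn_ord coef_Bseq_poly // entryP // ltnS leq_subr.
Qed.

Lemma typeI_Bseq_iff_series : g 0%N = 1 -> is_typeI_Bseq g f b <-> f =1 Bseq_series f b.
Proof.
move=> g0; split=> [B_b | fH n [//|k] _]; last first.
  apply/eqP; rewrite -subr_eq0 riordan_Bseq_defect big1 // => i _.
  by rewrite -fH subrr mulr0.
elim/ltn_ind => -[_ | m IH]; first by rewrite Bseq_series0 f0.
have := riordan_Bseq_defect m 0; rewrite B_b // subrr big_ord_recr big1 /=.
  rewrite subnn /riordan_entry big_ord1 g0 !mul1r add0r => /esym/eqP.
  by rewrite subr_eq0 => /eqP.
by move=> i _; rewrite -IH ?subrr ?mulr0.
Qed.

End BSequence.

Theorem theorem2p4 (K : numFieldType) (g f b : nat -> K) :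
  is_riordan g f ->
  (is_typeI_Bseq g f b <->
   [/\ f 1%N = 1,
       f 3%N = f 2%N ^+ 2,
       (forall l : nat, (1 <= l)%N ->
          b l.-1 = f (2 * l)%N
                   - comp_sum (shift_seq b) (shift_seq f) (2 * l) 1 l.-1) &
       (forall l : nat, (2 <= l)%N ->
          f (2 * l).+1 = comp_sum (shift_seq b) (shift_seq f) (2 * l).+1 1 (2 * l).+1
          /\ comp_sum (shift_seq b) (shift_seq f) (2 * l).+1 1 (2 * l).+1
             = f 2%N * f (2 * l)%N
               + comp_sum (shift_seq b) (shift_seq f) (2 * l).+1 2 l)]).
Proof.
move=> [g0 [f0 _]]; rewrite typeI_Bseq_iff_series //.
split=> [fH | [f1 f3 b_even f_odd]].
- have f1 : f 1%N = 1 by rewrite fH Bseq_series1.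
  have b_even l : (0 < l)%N ->
      b l.-1 = f (2 * l)%N - comp_sum (shift_seq b) (shift_seq f) (2 * l) 1 l.-1.
    by move=> l_gt0; rewrite fH Bseq_series_even // f1 expr1n mulr1 addrC addKr.
  have b0 : b 0%N = f 2%N by rewrite (b_even 1%N) // comp_sum_nil ?subr0.
  have f_odd l : (0 < l)%N ->
      f (2 * l).+1 = comp_sum (shift_seq b) (shift_seq f) (2 * l).+1 1 (2 * l).+1.
    by move=> l_gt0; rewrite fH Bseq_series_odd.
  split=> // [|l l_gt1].
    by rewrite (f_odd 1%N) // comp_sum_odd_split // comp_sum_nil // addr0 b0 expr2.
  by rewrite f_odd ?comp_sum_odd_split ?b0 // ltnW.
- have b0 : b 0%N = f 2%N by rewrite (b_even 1%N) // comp_sum_nil ?subr0.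
  elim/nat_parity_ind => [|| l l_gt0 | [//|[|l]] _].
  + by rewrite Bseq_series0.
  + by rewrite Bseq_series1.
  + by rewrite Bseq_series_even // f1 expr1n mulr1 (b_even l) // addrC subrK.
  + by rewrite Bseq_series_odd // comp_sum_odd_split // comp_sum_nil // addr0 b0 f3 expr2.
  + by rewrite Bseq_series_odd //; case: (f_odd l.+2 isT).
Qed.
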